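(* Let $w'\in\mathcal{W}^e_n$ and let $(O',E')\to(O,E)$ be one application of the step $(\omega)$ during the computation of $\Omega(w')$, using the notation $o'_1|\cdots|o'_h$, $e'_1|\cdots|e'_k$, and (in cases (P'), (F')) $e'_1=r_js_j\cdots s_1$ from the definition of $(\omega)$. Let $O=o_1|\cdots|o_m$ be the Lyndon factorization of $O$, with conventions $o_i=o'_i=\infty$ for $i\le0$. Then: (i) All the Lyndon factors of $E$ are even. (ii) The Lyndon factors of $O$ are odd and pairwise distinct, and the Lyndon factorization of $O$ is $o'_1|\cdots|o'_{h-1}|o'_he'_1$ after a step of type (S'), $o'_1|\cdots|o'_{h-1}|r_js_jo'_h$ after a step of type (P'), and $o'_1|\cdots|o'_h|s_j|r_j$ after a step of type (F'). (iii) $E<o_{m-1}$. (iv) If $|o_m|\ge2$ and its standard factorization is $o_m=rs$, then the leftmost Lyndon factor $e_1$ of $E$ satisfies $e_1\le s$. (v) After a step of type (S'), the standard factorization of $o_m$ is $o_m=o'_h\cdot e'_1$. (vi) After a step of type (P'), the standard factorization of $o_m$ is $o_m=(r_js_j)\cdot o'_h$.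
   Context: Fix a finite totally ordered alphabet $A$. Words are finite sequences over $A$; $-$ is the empty word. $<$ is lexicographic order (a proper prefix is smaller than the word); $\infty$ is a formal symbol with $w<\infty$ for all words $w$. A Lyndon word is a nonempty word strictly smaller than each of its proper nonempty suffixes. Every word has a unique Lyndon factorization $w=\ell_1\cdots\ell_m$ into Lyndon words with $\ell_1\ge\dots\ge\ell_m$, written $\ell_1|\cdots|\ell_m$; the $\ell_i$ are its Lyndon factors. Odd/even refer to lengths. For a Lyndon word $\ell$ with $|\ell|\ge2$, its standard factorization is $\ell=rs$ with $s$ the longest proper suffix of $\ell$ that is Lyndon (equivalently the smallest proper nonempty suffix). $\mathcal{W}^e_n$: words of length $n$ whose Lyndon factors are all even except possibly one factor of length one. Iterated standard factorization (ISF) of a Lyndon word $\ell$, $|\ell|\ge2$, with respect to $u$ (a word or $\infty$): the unique factorization $\ell=r_js_js_{j-1}\cdots s_1$, $j\ge1$, such that (a) for every $i\in[j]$, $s_i$ is the smallest proper nonempty suffix of $r_js_j\cdots s_i$; (b) for $i\in[j-1]$, $s_i$ is even and $s_i<u$; (c) $s_j$ is odd or $u\le s_j$. Computation of $\Omega(w')$ for $w'\in\mathcal{W}^e_n$: start with $(O',E')=(-,w')$; if $n$ is odd, remove the unique length-one Lyndon factor from $E'$ (so $E'$ becomes the concatenation of the remaining factors) and set $O'$ equal to that letter. While $E'$ is nonempty, apply step $(\omega)$: let $O'=o'_1|\cdots|o'_h$ and $E'=e'_1|\cdots|e'_k$ (with $o'_h=\infty$ if $O'$ is empty). If $o'_h<e'_1$,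 update to (S') $(O'e'_1,\ e'_2\cdots e'_k)$. Otherwise let $e'_1=r_js_js_{j-1}\cdots s_1$ be the ISF of $e'_1$ with respect to $o'_h$ and update to (P') $(o'_1\cdots o'_{h-1}r_js_jo'_h,\ s_{j-1}\cdots s_1e'_2\cdots e'_k)$ if $o'_h\le s_j$, or to (F') $(O's_jr_j,\ s_{j-1}\cdots s_1e'_2\cdots e'_k)$ if $s_j<o'_h$. When $E'$ is empty, $\Omega(w')=O'$. *)

From mathcomp Require Import all_boot all_order.
Set Implicit Arguments. Unset Strict Implicit. Unset Printing Implicit Defensive.
Import Order.TTheory.

Section Words.
Context {d : Order.disp_t} {A : finOrderType d}.

Definition word := seq A.

Fixpoint lexlt (u v : word) : bool :=
  match u, v with
  | [::], [::] => false
  | [::], _ :: _ => true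
  | _ :: _, [::] => false
  | a :: u', b :: v' => (a < b)%O || ((a == b) && lexlt u' v')
  end.

Definition lexle (u v : word) : bool := (u == v) || lexlt u v.

(* words extended with infinity: None = infinity, w < infinity for all w *)
Definition ltw (x y : option word) : bool :=
  match x, y with
  | Some u, Some v => lexlt u v
  | Some _, None => true
  | None, _ => false
  end.

Definition lew (x y : option word) : bool := (x == y) || ltw x y.

Definition lyndon (w : word) : bool :=
  (w != [::]) && all (fun i => lexlt w (drop i w)) (iota 1 (size w).-1).

Definition is_lyndon_fact (w : word) (fs : seq word) : Prop :=
  [/\ flatten fs = w, all lyndon fs & sorted (fun x y => lexle y x) fs].

Definition std_fact (l r s : word) : Prop :=
  [/\ r != [::], l = r ++ s, lyndon s &
      forall i, 0 < i < size l -> lyndon (drop i l) -> size (drop i l) <= size s].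

Definition smallest_proper_suffix (s t : word) : Prop :=
  [/\ s != [::], size s < size t, drop (size t - size s) t = s &
      forall i, 0 < i < size t -> lexle s (drop i t)].

(* Iterated standard factorization of l w.r.t. u:  l = r_j s_j s_(j-1) ... s_1,
   encoded as r = r_j and ss = [:: s_j; s_(j-1); ...; s_1]  (j = size ss >= 1). *)
Definition is_ISF (l : word) (u : option word) (r : word) (ss : seq word) : Prop :=
  [/\ ss != [::], l = r ++ flatten ss,
      (forall k, k < size ss ->
         smallest_proper_suffix (nth [::] ss k) (r ++ flatten (take k.+1 ss))),
      (forall s, s \in behead ss -> ~~ odd (size s) && ltw (Some s) u) &
      odd (size (head [::] ss)) || lew u (Some (head [::] ss))].

Definition olast (os : seq word) : option word :=
  if os is [::] then None else Some (last [::] os).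

Definition dropl (os : seq word) : seq word := take (size os).-1 os.

(* i-th factor (1-based), infinity if i <= 0 or out of range *)
Definition fact_at (os : seq word) (i : nat) : option word :=
  if (0 < i) && (i <= size os) then Some (nth [::] os i.-1) else None.

Definition stepS (os' es' : seq word) (O E : word) : Prop :=
  match es' with
  | e1 :: rest => [/\ ltw (olast os') (Some e1), O = flatten os' ++ e1 & E = flatten rest]
  | [::] => False
  end.

Definition stepP (os' es' : seq word) (r : word) (ss : seq word) (O E : word) : Prop :=
  match es', ss with
  | e1 :: rest, sj :: ssr =>
      [/\ ~~ ltw (olast os') (Some e1), is_ISF e1 (olast os') r ss,
          lew (olast os') (Some sj),
          O = flatten (dropl os') ++ r ++ sj ++ odflt [::] (olast os') &
          E = flatten ssr ++ flatten rest]
  | _, _ => False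
  end.

Definition stepF (os' es' : seq word) (r : word) (ss : seq word) (O E : word) : Prop :=
  match es', ss with
  | e1 :: rest, sj :: ssr =>
      [/\ ~~ ltw (olast os') (Some e1), is_ISF e1 (olast os') r ss,
          ltw (Some sj) (olast os'),
          O = flatten os' ++ sj ++ r &
          E = flatten ssr ++ flatten rest]
  | _, _ => False
  end.

Definition omega_step (O' E' O E : word) : Prop :=
  exists os' es', [/\ is_lyndon_fact O' os', is_lyndon_fact E' es' &
    stepS os' es' O E \/ (exists r ss, stepP os' es' r ss O E)
                      \/ (exists r ss, stepF os' es' r ss O E)].

Definition in_We (n : nat) (w : word) : Prop :=
  size w = n /\
  exists fs, [/\ is_lyndon_fact w fs,
                 all (fun f => odd (size f) ==> (size f == 1%N)) fs &
                 count (fun f => odd (size f)) fs <= 1].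

Definition omega_init (w O E : word) : Prop :=
  exists fs, is_lyndon_fact w fs /\
    if odd (size w) then
      exists f1 f2 a, [/\ fs = f1 ++ [:: [:: a]] ++ f2, O = [:: a] & E = flatten (f1 ++ f2)]
    else O = [::] /\ E = w.

Inductive omega_reach (w : word) : word -> word -> Prop :=
| omega_reach0 O E : omega_init w O E -> omega_reach w O E
| omega_reachS O' E' O E : omega_reach w O' E' -> E' != [::] ->
    omega_step O' E' O E -> omega_reach w O E.

End Words.

(* The statements (i)-(iv) form an invariant of the computation of Omega: they hold
   for the initial pair and each step (omega) preserves them.  Factors
   are glued by the rule that [u ++ v] is Lyndon when [u < v] are Lyndon; the new
   last factor [x ++ y] has standard factorization [(x, y)] because [y] is at most
   every proper suffix of [x] (by (iv) in case (S'), by the minimality of [s_j] in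
   case (P')), the standard right factor of a word being its least proper suffix;
   the new [E] stays below the new penultimate factor [L] because a word whose
   factors all lie below a Lyndon word [L] lies below [L]; parities come from (i)
   and the ISF conditions.  Uniqueness of Lyndon factorizations makes all of this
   independent of the factorizations chosen. *)

From mathcomp Require Import all_boot all_order zify.
Set Implicit Arguments. Unset Strict Implicit. Unset Printing Implicit Defensive.
Import Order.TTheory Order.DefaultSeqLexiOrder.

Section LexWords.
Local Open Scope order_scope.
Context {d : Order.disp_t} {A : finOrderType d}.
Local Notation word := (seq A).
Implicit Types u v w x y p s t : word.

Lemma lexltE u v : lexlt u v = (u < v).
Proof. by elim: u v => [|a u IH] [|b v] //=; rewrite ltxi_cons IH; case: ltgtP. Qed.

Lemma lexleE u v : lexle u v = (u <= v).
Proof. by rewrite /lexle lexltE le_eqVlt. Qed.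

Lemma lt_catl p u v : (p ++ u < p ++ v) = (u < v).
Proof. by elim: p => //= a p IH; rewrite eqhead_ltxiE. Qed.

Lemma le_catl p u v : (p ++ u <= p ++ v) = (u <= v).
Proof. by elim: p => //= a p IH; rewrite eqhead_lexiE. Qed.

Lemma le_prefix u x : u <= u ++ x.
Proof. by rewrite -{1}[u]cats0 le_catl lexi0s. Qed.

Lemma ltxi_catP u v : u < v ->
  (exists2 x, x != [::] & v = u ++ x) \/ (forall x y, u ++ x < v ++ y).
Proof.
elim: u v => [|a u IH] [|b v] //=; first by left; exists (b :: v).
rewrite ltxi_cons; case: (ltgtP a b) => //= [ab _|<- /IH[[x nx ->]|uv]].
- by right=> x y; rewrite ltxi_cons (ltW ab) leNgt ab.
- by left; exists x.
- by right=> x y; rewrite eqhead_ltxiE.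
Qed.

Lemma lt_cat_size u v x y : u < v -> (size v <= size u)%N -> u ++ x < v ++ y.
Proof.
case/ltxi_catP=> [[z nz ->]|//]; rewrite size_cat -size_eq0 in nz *.
by rewrite leqNgt -{1}[size u]addn0 ltn_add2l lt0n nz.
Qed.

End LexWords.

Lemma eq_cat_split (T : Type) (x y p q : seq T) :
  x ++ y = p ++ q -> (size x <= size p)%N -> exists2 z, p = x ++ z & y = z ++ q.
Proof.
elim: x p => [|a x IH] p /=; first by move=> ->; exists p.
by case: p => [|b p] //= [<- /IH H /H[z -> ->]]; exists z.
Qed.

Lemma cat_eq_suffix (T : Type) (p y : seq T) : y = p ++ y -> p = [::].
Proof. by case: p => // a p /(congr1 size); rewrite size_cat /=; lia. Qed.

Section Lyndon.
Local Open Scope order_scope.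
Context {d : Order.disp_t} {A : finOrderType d}.
Local Notation word := (seq A).
Implicit Types u v w x y p s t L : word.

Lemma lyndonP w :
  reflect (w != [::] /\ forall p y, w = p ++ y -> p != [::] -> y != [::] -> w < y)
          (lyndon w).
Proof.
apply: (iffP andP) => -[nw H]; split=> //.
  move=> p y E np ny; move/allP: H => /(_ (size p)); rewrite -lexltE E drop_size_cat //.
  apply; rewrite mem_iota size_cat.
  by case: p y np ny {E} => [|a p] [|b y] //= _ _; rewrite addnS /= add1n ltnS leq_addr.
apply/allP=> i; rewrite mem_iota add1n prednK; last by rewrite lt0n size_eq0.
case/andP=> i0 iw; rewrite lexltE; apply: (H (take i w)); first by rewrite cat_take_drop.
  by rewrite -size_eq0 size_take iw -lt0n.
by rewrite -size_eq0 size_drop subn_eq0 -ltnNge.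
Qed.

Lemma lyndon_neq0 w : lyndon w -> w != [::].
Proof. by case/andP. Qed.

Lemma lyndon_lt_suffix w p y :
  lyndon w -> w = p ++ y -> p != [::] -> y != [::] -> w < y.
Proof. by case/lyndonP=> _; apply. Qed.

Lemma lyndon_cat_lt u v : lyndon u -> lyndon v -> u < v -> u ++ v < v.
Proof.
move=> Lu Lv /ltxi_catP[[x nx E]|]; last by move/(_ v [::]); rewrite cats0.
by rewrite {2}E lt_catl; apply: lyndon_lt_suffix Lv E (lyndon_neq0 Lu) nx.
Qed.

Lemma lyndon_cat u v : lyndon u -> lyndon v -> u < v -> lyndon (u ++ v).
Proof.
move=> Lu Lv uv; have nu := lyndon_neq0 Lu; apply/lyndonP; split=> [|p y E np ny].
  by case: (u) nu.
have [le_up|lt_pu] := leqP (size u) (size p).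
  have [z Ep Ev] := eq_cat_split E le_up.
  have uvv := lyndon_cat_lt Lu Lv uv.
  have [z0|nz] := eqVneq z [::]; first by rewrite Ev z0 in uvv *.
  exact: lt_trans uvv (lyndon_lt_suffix Lv Ev nz ny).
have [z Eu Ey] := eq_cat_split (esym E) (ltnW lt_pu).
have nz : z != [::] by apply: contraTneq lt_pu => z0; rewrite Eu z0 cats0 ltnn.
rewrite Ey; apply: lt_cat_size; first exact: lyndon_lt_suffix Lu Eu np nz.
by rewrite Eu size_cat leq_addl.
Qed.

Lemma lt_lyndon_cat L u v : lyndon L -> u < L -> v < L -> u ++ v < L.
Proof.
move=> LL /ltxi_catP[[x nx E]|]; last by move=> + _; move/(_ v [::]); rewrite cats0.
have [-> //|nu] := eqVneq u [::].
by rewrite {2}E lt_catl => vL; apply: lt_trans vL (lyndon_lt_suffix LL E nu nx).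
Qed.

Lemma lt_lyndon_flatten L (fs : seq word) :
  lyndon L -> all (< L) fs -> flatten fs < L.
Proof.
move=> LL; elim: fs => [|f fs IH] /=; first by rewrite ltxi0s lyndon_neq0.
by case/andP=> fL /IH; apply: lt_lyndon_cat.
Qed.

End Lyndon.

Section StandardFactorization.
Local Open Scope order_scope.
Context {d : Order.disp_t} {A : finOrderType d}.
Local Notation word := (seq A).
Implicit Types l u v w x y p r s t : word.

Definition least_suffix_fact r s : Prop :=
  [/\ r != [::], s != [::] &
      forall p y, r ++ s = p ++ y -> p != [::] -> y != [::] -> s <= y].

Lemma smallest_proper_suffix_least r s :
  smallest_proper_suffix s (r ++ s) -> least_suffix_fact r s.
Proof.
case; rewrite size_cat addnK drop_size_cat // => ns lt_s_rs _ min_s.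
split=> // [|p y E np ny].
  by rewrite -size_eq0 -lt0n -(ltn_add2r (size s)).
move: (min_s (size p)); rewrite E drop_size_cat // lexleE; apply.
rewrite -size_cat (congr1 size E) size_cat.
by case: p y np ny {E} => [|a p] [|b y] //= _ _; rewrite addnS ltnS leq_addr.
Qed.

Lemma least_suffix_fact_lyndon r s : least_suffix_fact r s -> lyndon s.
Proof.
case=> nr ns min_s; apply/lyndonP; split=> // p y E np ny.
rewrite lt_neqAle (min_s (r ++ p)) ?andbT.
- by apply: contra_neq np => sy; apply: (@cat_eq_suffix _ _ y); rewrite -{1}sy.
- by rewrite E catA.
- by case: (r) nr.
- exact: ny.
Qed.

Lemma least_suffix_fact_le_inner r s c y :
  least_suffix_fact r s -> r = c ++ y -> c != [::] -> y != [::] -> s <= y.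
Proof.
case=> _ ns min_s Er nc ny; rewrite leNgt; apply/negP=> ys.
have lt_ys_s : y ++ s < s.
  case/ltxi_catP: ys => [[x nx E]|]; last by move/(_ s [::]); rewrite cats0.
  rewrite {2}E lt_catl lt_neqAle (min_s (r ++ y)) ?andbT //.
  - by apply: contra_neq ny => sx; apply: (@cat_eq_suffix _ _ x); rewrite -{1}sx.
  - by rewrite E catA.
  - by rewrite Er; case: (c) nc.
suff: s <= y ++ s by rewrite leNgt lt_ys_s.
by apply: min_s nc _; [rewrite Er catA | case: (y) ny].
Qed.

Lemma least_suffix_fact_lyndon_prefix r s :
  lyndon (r ++ s) -> least_suffix_fact r s -> lyndon r.
Proof.
move=> Lrs [nr ns min_s]; apply/lyndonP; split=> // p y Er np ny.
have t_ys : r ++ s < y ++ s.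
  by apply: lyndon_lt_suffix Lrs _ np _; [rewrite Er catA | case: (y) ny].
rewrite ltNge le_eqVlt negb_or; apply/andP; split.
  by apply: contra_neq np => yr; apply: (@cat_eq_suffix _ _ y); rewrite {1}yr.
apply/negP=> /ltxi_catP[[x nx E]|/(_ s s)]; last by rewrite ltNge (ltW t_ys).
move: t_ys; rewrite {1}E -catA lt_catl ltNge (min_s y) //; last by case: (x) nx.
by rewrite E catA.
Qed.

Lemma std_fact_cat u v : lyndon v -> u != [::] ->
  (forall c y, u = c ++ y -> c != [::] -> y != [::] -> v <= y) ->
  std_fact (u ++ v) u v.
Proof.
move=> Lv nu le_v; split=> // i /andP[i0 i_uv] Lz; rewrite leqNgt; apply/negP=> longer.
have iu : (i < size u)%N by move: longer; rewrite !size_drop size_cat; lia.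
move: Lz; rewrite drop_cat iu => Lz.
have nq : drop i u != [::] by rewrite -size_eq0 size_drop subn_eq0 -ltnNge.
have nt : take i u != [::] by rewrite -size_eq0 size_take iu -lt0n.
have := le_trans (le_v _ _ (esym (cat_take_drop i u)) nt nq) (le_prefix _ v).
by rewrite leNgt (lyndon_lt_suffix Lz erefl nq (lyndon_neq0 Lv)).
Qed.

Lemma least_suffix_std_fact r s : least_suffix_fact r s -> std_fact (r ++ s) r s.
Proof.
move=> lsf; have [nr _ _] := lsf.
apply: std_fact_cat (least_suffix_fact_lyndon lsf) nr _ => c y.
exact: least_suffix_fact_le_inner.
Qed.

Lemma least_suffix_fact_exists t :
  (1 < size t)%N -> exists r s, t = r ++ s /\ least_suffix_fact r s.
Proof.
move=> t2; pose i0 := Ordinal t2.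
have [i i_gt0 min_i] := @arg_minP _ _ _ i0 (fun i => 0 < i)%N (fun i => drop i t) isT.
exists (take i t), (drop i t); split; first by rewrite cat_take_drop.
split=> [||p y E np ny].
- by rewrite -size_eq0 size_take ltn_ord -lt0n.
- by rewrite -size_eq0 size_drop subn_eq0 -ltnNge.
have sp : (size p < size t)%N.
  rewrite -(cat_take_drop i t) E size_cat.
  by case: y ny {E} => // b y _; rewrite /= addnS ltnS leq_addr.
have <- : drop (size p) t = y by rewrite -(cat_take_drop i t) E drop_size_cat.
by apply: (min_i (Ordinal sp)); rewrite lt0n size_eq0.
Qed.

Lemma std_fact_cat_std u v : lyndon v -> u != [::] ->
  (forall r s, std_fact u r s -> v <= s) -> std_fact (u ++ v) u v.
Proof.
move=> Lv nu le_v; apply: std_fact_cat Lv nu _ => c y Eu nc ny.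
have [|r [s [Ers lsf]]] := @least_suffix_fact_exists u.
  by rewrite Eu size_cat; case: c nc {Eu} => // ? ? _; case: y ny => // ? ? _; rewrite /= addnS.
have [_ _ min_s] := lsf.
apply: le_trans (le_v r s _) (min_s c y _ nc ny); last by rewrite -Ers.
by rewrite Ers; apply: least_suffix_std_fact.
Qed.

Lemma std_fact_unique l r s r' s' : std_fact l r s -> std_fact l r' s' -> s = s'.
Proof.
have longest r1 s1 r2 s2 : std_fact l r1 s1 -> std_fact l r2 s2 -> (size s2 <= size s1)%N.
  case=> _ _ _ max1 [nr2 E2 L2 _]; move: (max1 (size r2)); rewrite E2 drop_size_cat //.
  apply=> //; rewrite size_cat -!size_eq0 -lt0n in nr2 *.
  by rewrite nr2 -{1}[size r2]addn0 ltn_add2l lt0n size_eq0 lyndon_neq0.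
move=> std std'; have /eqP eq_size : size s == size s'.
  by rewrite eqn_leq (longest _ _ _ _ std' std) (longest _ _ _ _ std std').
have suffixE r1 s1 : std_fact l r1 s1 -> s1 = drop (size l - size s1) l.
  by case=> _ -> _ _; rewrite size_cat addnK drop_size_cat.
by rewrite (suffixE _ _ std) (suffixE _ _ std') eq_size.
Qed.

Lemma std_fact_size l r s : std_fact l r s -> (1 < size l)%N.
Proof.
case=> nr -> /lyndon_neq0 ns _; rewrite size_cat.
by case: r nr => // a r _; case: s ns => // b s _; rewrite /= addnS.
Qed.

End StandardFactorization.

Lemma odd_size_flatten (T : Type) (fs : seq (seq T)) :
  odd (size (flatten fs)) = odd (count (fun f => odd (size f)) fs).
Proof. by elim: fs => //= f fs IH; rewrite size_cat !oddD IH oddb. Qed.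

Lemma count_odd_eq0 (T : Type) (fs : seq (seq T)) :
  (count (fun f => odd (size f)) fs == 0) = all (fun f => ~~ odd (size f)) fs.
Proof. by elim: fs => //= f fs <-; case: odd. Qed.

Section LyndonFactorization.
Local Open Scope order_scope.
Context {d : Order.disp_t} {A : finOrderType d}.
Local Notation word := (seq A).
Implicit Types (u v w x y z : word) (fs gs : seq word).

Lemma lyndon_factE w fs :
  is_lyndon_fact w fs <-> [/\ flatten fs = w, all lyndon fs & sorted >=%O fs].
Proof.
rewrite /is_lyndon_fact; suff -> : sorted (fun x y => lexle y x) fs = sorted >=%O fs by [].
by case: fs => //= f fs; apply: eq_path => x y; rewrite lexleE.
Qed.

Lemma flatten_prefix_factor fs v z : flatten fs = v ++ z -> v != [::] ->
  exists c u f, [/\ v = c ++ u, u != [::], f \in fs & prefix u f].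
Proof.
elim: fs v => [|f fs IH] v /=; first by case: v.
move=> E nv; have [le_vf|lt_fv] := leqP (size v) (size f).
  have [x -> _] := eq_cat_split (esym E) le_vf.
  by exists [::], v, (v ++ x); rewrite mem_head prefix_prefix.
have [y Ev Ey] := eq_cat_split E (ltnW lt_fv).
have ny : y != [::] by apply: contraTneq lt_fv => y0; rewrite Ev y0 cats0 ltnn.
have [c [u [g [Ey' nu gfs ug]]]] := IH _ Ey ny.
by exists (f ++ c), u, g; rewrite Ev Ey' catA in_cons gfs orbT.
Qed.

Lemma lyndon_fact_head_longest f fs g z :
  f ++ flatten fs = g ++ z -> f != [::] -> lyndon g -> sorted >=%O (f :: fs) ->
  (size g <= size f)%N.
Proof.
move=> E nf Lg sorted_f; rewrite leqNgt; apply/negP=> lt_fg.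
have [v Eg Ev] := eq_cat_split E (ltnW lt_fg).
have nv : v != [::] by apply: contraTneq lt_fg => v0; rewrite Eg v0 cats0 ltnn.
have [c [u [h [Evu nu hfs /prefixP[x Eh]]]]] := flatten_prefix_factor Ev nv.
have gu : g < u.
  by apply: lyndon_lt_suffix Lg _ _ nu; [rewrite Eg Evu catA | case: (f) nf].
have hf : h <= f by move/allP: (order_path_min ge_trans sorted_f); apply.
have : u <= g by rewrite Eg (le_trans (le_prefix u x)) // -Eh (le_trans hf) ?le_prefix.
by rewrite leNgt gu.
Qed.

Lemma lyndon_fact_unique w fs gs :
  is_lyndon_fact w fs -> is_lyndon_fact w gs -> fs = gs.
Proof.
move=> /lyndon_factE[<- Lfs Sfs] /lyndon_factE[Ew Lgs Sgs].
elim: fs gs Ew Lfs Sfs Lgs Sgs => [|f fs IH] [|g gs] //=.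
- by move=> E _ _ /andP[/lyndon_neq0 ng _]; case: g ng E.
- by move=> E /andP[/lyndon_neq0 nf _]; case: f nf E.
move=> E /andP[Lf Lfs] Sfs /andP[Lg Lgs] Sgs.
have /eqP eq_fg : size g == size f.
  rewrite eqn_leq (lyndon_fact_head_longest E) ?lyndon_neq0 // andbT.
  exact: lyndon_fact_head_longest (esym E) (lyndon_neq0 Lf) Lg Sfs.
move/eqP: E; rewrite eqseq_cat // => /andP[/eqP-> /eqP E].
by rewrite (IH gs E Lfs (path_sorted Sfs) Lgs (path_sorted Sgs)).
Qed.

Lemma lyndon_fact_cons w f fs : is_lyndon_fact w (f :: fs) ->
  [/\ w = f ++ flatten fs, lyndon f, all (<= f) fs & is_lyndon_fact (flatten fs) fs].
Proof.
case/lyndon_factE=> <- /andP[Lf Lfs] Sfs; split=> //.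
  exact: order_path_min ge_trans Sfs.
by apply/lyndon_factE; split=> //; apply: path_sorted Sfs.
Qed.

End LyndonFactorization.

Section IteratedStandardFactorization.
Local Open Scope order_scope.
Context {d : Order.disp_t} {A : finOrderType d}.
Local Notation word := (seq A).
Variables (l : word) (u : option word) (r : word) (ss : seq word).
Hypotheses (Ll : lyndon l) (isf : is_ISF l u r ss).

(* With [ss = [:: s_j; ...; s_1]], [T k] is the prefix [r_j s_j ... s_(j-k+1)] of [l],
   and condition (a) says that [nth [::] ss k] is the least proper suffix of [T k.+1]. *)
Let T k := r ++ flatten (take k ss).

Let T_rcons k : (k < size ss)%N -> T k.+1 = T k ++ nth [::] ss k.
Proof. by move=> ltk; rewrite /T (take_nth [::]) // flatten_rcons catA. Qed.

Let T_size : T (size ss) = l.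
Proof. by case: isf => _ El _ _ _; rewrite /T take_size. Qed.

Let T_least_suffix k : (k < size ss)%N -> least_suffix_fact (T k) (nth [::] ss k).
Proof.
move=> ltk; case: isf => _ _ sps _ _.
by apply: smallest_proper_suffix_least; rewrite -T_rcons //; apply: sps.
Qed.

Let T_lyndon k : (k <= size ss)%N -> lyndon (T k).
Proof.
move=> lek; rewrite -(subKn lek); elim: (size ss - k) (leq_subr k (size ss)) => [|m IH] le_m.
  by rewrite subn0 T_size.
have ltm : (size ss - m.+1 < size ss)%N by rewrite -subSn // subSS leq_subr.
apply: least_suffix_fact_lyndon_prefix (T_least_suffix ltm).
by rewrite -T_rcons // subnSK // IH // ltnW.
Qed.

Lemma ISF_lyndon_prefix : lyndon r.
Proof. by have := T_lyndon (leq0n _); rewrite /T take0 cats0. Qed.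

Let ss_gt0 : (0 < size ss)%N.
Proof. by case: isf; rewrite lt0n size_eq0. Qed.

Lemma ISF_least_suffix_head : least_suffix_fact r (head [::] ss).
Proof. by have := T_least_suffix ss_gt0; rewrite /T take0 cats0 nth0. Qed.

Let T_neq0 k : T k != [::].
Proof. by have [nr _ _] := ISF_least_suffix_head; rewrite /T; case: r nr. Qed.

Lemma ISF_lyndon_head : lyndon (r ++ head [::] ss).
Proof.
have := T_lyndon ss_gt0; rewrite /T.
by case: (ss) ss_gt0 => //= s ss' _; rewrite take0 cats0.
Qed.

Lemma ISF_lyndon_factors : all lyndon ss.
Proof.
by apply/(all_nthP [::]) => k ltk; apply: least_suffix_fact_lyndon (T_least_suffix ltk).
Qed.

Lemma ISF_sorted : sorted >=%O ss.
Proof.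
apply/(sortedP [::]) => k ltk1; have ltk := ltnW ltk1.
have [_ nsk _] := T_least_suffix ltk.
exact: least_suffix_fact_le_inner (T_least_suffix ltk1) (T_rcons ltk) (T_neq0 k) nsk.
Qed.

Lemma ISF_lt_last : l < last [::] ss.
Proof.
have ltk : ((size ss).-1 < size ss)%N by rewrite prednK.
have [_ nsk _] := T_least_suffix ltk.
rewrite -nth_last; apply: lyndon_lt_suffix Ll _ (T_neq0 (size ss).-1) nsk.
by rewrite -(T_rcons ltk) prednK.
Qed.

End IteratedStandardFactorization.

Section OmegaInvariant.
Local Open Scope order_scope.
Context {d : Order.disp_t} {A : finOrderType d}.
Local Notation word := (seq A).
Implicit Types (x y : word) (os es fs : seq word).

Lemma gt_sorted_uniq_ge fs : sorted >%O fs = uniq fs && sorted >=%O fs.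
Proof. by have := lt_sorted_uniq_le (rev fs); rewrite rev_uniq !rev_sorted. Qed.

Lemma ltw_someE x y : ltw (Some x) (Some y) = (x < y).
Proof. exact: lexltE. Qed.

Lemma lew_someE x y : lew (Some x) (Some y) = (x <= y).
Proof. by rewrite /lew /= lexltE le_eqVlt. Qed.

Lemma ltw_lewF (o o' : option word) : ltw o o' -> lew o' o = false.
Proof.
by case: o o' => [x|] [y|] //; rewrite lew_someE ltw_someE leNgt => ->.
Qed.

Lemma olast_rcons os x : olast (rcons os x) = Some x.
Proof. by case: os => //= y os; rewrite last_rcons. Qed.

Lemma dropl_rcons os x : dropl (rcons os x) = os.
Proof. by rewrite /dropl size_rcons -cats1 take_size_cat. Qed.

Lemma fact_at_rcons os x : fact_at (rcons os x) (size (rcons os x)).-1 = olast os.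
Proof.
rewrite size_rcons /fact_at; case: os => [|y os] //=.
by rewrite size_rcons ltnS leqW // -rcons_cons nth_rcons ltnSn nth_last.
Qed.

Lemma olast_lyndon os : all lyndon os -> oapp lyndon true (olast os).
Proof. by case: os => // y os /allP/(_ _ (mem_last y os)). Qed.

Lemma sorted_gt_rcons os x :
  sorted >%O (rcons os x) = sorted >%O os && ltw (Some x) (olast os).
Proof. by case: os => //= y os; rewrite rcons_path lexltE. Qed.

Lemma ltw_le_trans (o : option word) x y : x <= y -> ltw (Some y) o -> ltw (Some x) o.
Proof. by case: o => //= L; rewrite !lexltE; apply: le_lt_trans. Qed.

Lemma ltw_flatten (o : option word) fs :
  oapp lyndon true o -> all (fun f => ltw (Some f) o) fs -> ltw (Some (flatten fs)) o.
Proof.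
case: o => //= L LL lt_fs; rewrite lexltE; apply: lt_lyndon_flatten LL _.
by apply: sub_all lt_fs => f /=; rewrite lexltE.
Qed.

Lemma ltw_cat (o : option word) x y :
  oapp lyndon true o -> ltw (Some x) o -> ltw (Some y) o -> ltw (Some (x ++ y)) o.
Proof. by case: o => //= L LL; rewrite !lexltE; apply: lt_lyndon_cat. Qed.

Lemma gt_sorted_ge fs : sorted >%O fs -> sorted >=%O fs.
Proof. by rewrite gt_sorted_uniq_ge => /andP[]. Qed.

Definition omega_inv (O E : word) : Prop :=
  (forall es, is_lyndon_fact E es -> all (fun e => ~~ odd (size e)) es) /\
  (forall os, is_lyndon_fact O os ->
     [/\ all (fun o => odd (size o)) os, uniq os,
         ltw (Some E) (fact_at os (size os).-1) &
         forall pre om r s es e1 rest, os = rcons pre om -> (2 <= size om)%N ->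
           std_fact om r s -> is_lyndon_fact E es -> es = e1 :: rest ->
           lexle e1 s]).

Lemma omega_invI O E os es :
  is_lyndon_fact O os -> is_lyndon_fact E es ->
  all (fun o => odd (size o)) os -> all (fun e => ~~ odd (size e)) es ->
  sorted >%O os -> ltw (Some E) (fact_at os (size os).-1) ->
  (forall pre om r s, os = rcons pre om -> std_fact om r s -> all (<= s) es) ->
  omega_inv O E.
Proof.
move=> FO FE odd_os even_es sorted_os bound le_es.
split=> [es' /(lyndon_fact_unique FE) <- //|os' /(lyndon_fact_unique FO) <-].
split=> //; first by move: sorted_os; rewrite gt_sorted_uniq_ge => /andP[].
move=> pre om r s es' e1 rest Eos _ std /(lyndon_fact_unique FE) <- Ees.
by move: (le_es _ _ _ _ Eos std); rewrite Ees /= lexleE => /andP[].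
Qed.

Lemma omega_inv_facts O E os e1 rest :
  omega_inv O E -> is_lyndon_fact O os -> is_lyndon_fact E (e1 :: rest) ->
  [/\ all (fun o => odd (size o)) os, sorted >%O os,
      ltw (Some E) (fact_at os (size os).-1),
      all (fun e => ~~ odd (size e)) (e1 :: rest) &
      forall pre om r s, os = rcons pre om -> std_fact om r s -> e1 <= s].
Proof.
move=> [even_E inv_O] FO FE; have [odd_os uniq_os bound le_e1] := inv_O _ FO.
split=> //.
- by rewrite gt_sorted_uniq_ge uniq_os; case/lyndon_factE: FO.
- exact: even_E.
- move=> pre om r s Eos std.
  by rewrite -lexleE (le_e1 pre om r s (e1 :: rest) e1 rest) ?(std_fact_size std).
Qed.

Lemma omega_inv_push O E pre x y es :
  all lyndon pre -> all (fun o => odd (size o)) pre -> sorted >%O pre ->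
  ltw (Some x) (olast pre) -> ltw (Some y) (olast pre) ->
  lyndon (x ++ y) -> odd (size (x ++ y)) -> std_fact (x ++ y) x y ->
  O = flatten pre ++ x ++ y -> is_lyndon_fact E es ->
  all (fun e => ~~ odd (size e)) es -> all (<= y) es ->
  is_lyndon_fact O (rcons pre (x ++ y)) /\ omega_inv O E.
Proof.
move=> Lpre odd_pre sorted_pre x_L y_L LX odd_X std_X EO FE even_es le_es.
have /lyndon_factE[EE _ _] := FE.
have sorted_new : sorted >%O (rcons pre (x ++ y)).
  by rewrite sorted_gt_rcons sorted_pre ltw_cat ?olast_lyndon.
have FO : is_lyndon_fact O (rcons pre (x ++ y)).
  apply/lyndon_factE; split; first by rewrite EO flatten_rcons.
    by rewrite all_rcons LX.
  exact: gt_sorted_ge.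
split=> //; apply: omega_invI FO FE _ even_es sorted_new _ _.
- by rewrite all_rcons odd_X.
- rewrite fact_at_rcons -EE; apply: ltw_flatten (olast_lyndon Lpre) _.
  by apply: sub_all le_es => f le_f; apply: ltw_le_trans le_f y_L.
- move=> pre' om r s /rcons_inj[_ <-] std.
  by rewrite (std_fact_unique std std_X).
Qed.

End OmegaInvariant.

Section OmegaStep.
Local Open Scope order_scope.
Context {d : Order.disp_t} {A : finOrderType d}.
Local Notation word := (seq A).
Variables (O' E' O E e1 : word) (rest : seq word).
Hypotheses (inv : omega_inv O' E') (FE : is_lyndon_fact E' (e1 :: rest)).

Lemma stepS_omega_inv pre oh :
  is_lyndon_fact O' (rcons pre oh) -> stepS (rcons pre oh) (e1 :: rest) O E ->
  [/\ is_lyndon_fact O (rcons pre (oh ++ e1)), std_fact (oh ++ e1) oh e1 &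
      omega_inv O E].
Proof.
move=> FO [lt_oh_e1 EO EE]; rewrite olast_rcons ltw_someE in lt_oh_e1.
have [odd_os sorted_os bound /andP[even_e1 even_rest] le_std] := omega_inv_facts inv FO FE.
have [EE' Le1 le_rest Frest] := lyndon_fact_cons FE.
case/lyndon_factE: FO => _ Los _.
move: Los sorted_os odd_os bound; rewrite !all_rcons fact_at_rcons sorted_gt_rcons.
case/andP=> Loh Lpre /andP[sorted_pre oh_L] /andP[odd_oh odd_pre] E'_L.
have std_X : std_fact (oh ++ e1) oh e1.
  by apply: std_fact_cat_std Le1 (lyndon_neq0 Loh) _ => r s /(le_std pre oh r s erefl).
have e1_L : ltw (Some e1) (olast pre) by apply: ltw_le_trans E'_L; rewrite EE' le_prefix.
have odd_X : odd (size (oh ++ e1)) by rewrite size_cat oddD odd_oh (negbTE even_e1).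
rewrite flatten_rcons -catA in EO; rewrite -EE in Frest.
have [] := omega_inv_push Lpre odd_pre sorted_pre oh_L e1_L (lyndon_cat Loh Le1 lt_oh_e1)
  odd_X std_X EO Frest even_rest le_rest.
by split.
Qed.

Lemma ISF_step_facts (u : option word) r sj ssr : is_ISF e1 u r (sj :: ssr) ->
  [/\ e1 = (r ++ sj) ++ flatten ssr,
      all (fun s => ~~ odd (size s) && ltw (Some s) u) ssr,
      ~~ odd (size (r ++ sj)) &
      is_lyndon_fact (flatten ssr ++ flatten rest) (ssr ++ rest)].
Proof.
move=> isf; have [_ Ee1 _ small_ssr _] := isf; rewrite /= catA in Ee1.
have {}small_ssr : all (fun s => ~~ odd (size s) && ltw (Some s) u) ssr by apply/allP.
have [_ Le1 _ /lyndon_factE[_ Lrest sorted_rest]] := lyndon_fact_cons FE.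
split=> //.
- have /andP[even_e1 _] := inv.1 _ FE; move: even_e1.
  have /eqP count0 : count (fun s => odd (size s)) ssr == 0.
    by rewrite count_odd_eq0; apply: sub_all small_ssr => s /andP[].
  by rewrite Ee1 size_cat oddD odd_size_flatten count0 addbF.
apply/lyndon_factE; split; first by rewrite flatten_cat.
  by rewrite all_cat Lrest andbT; case/andP: (ISF_lyndon_factors isf).
have sorted_all : sorted >=%O (sj :: ssr ++ e1 :: rest).
  have /lyndon_factE[_ _ sorted_e1] := FE.
  by rewrite /= cat_path (ISF_sorted isf : path _ sj ssr) /= ltW ?(ISF_lt_last Le1 isf).
apply: (subseq_sorted ge_trans _ sorted_all).
apply: subseq_trans (subseq_cons _ sj).
exact: cat_subseq (subseq_refl ssr) (subseq_cons rest e1).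
Qed.

Lemma stepP_omega_inv pre oh r sj ssr :
  is_lyndon_fact O' (rcons pre oh) ->
  stepP (rcons pre oh) (e1 :: rest) r (sj :: ssr) O E ->
  [/\ is_lyndon_fact O (rcons pre (r ++ sj ++ oh)),
      std_fact (r ++ sj ++ oh) (r ++ sj) oh & omega_inv O E].
Proof.
move=> FO [not_lt isf oh_sj EO EE].
rewrite olast_rcons ltw_someE -leNgt in not_lt; rewrite olast_rcons lew_someE in oh_sj.
have [odd_os sorted_os bound _ _] := omega_inv_facts inv FO FE.
have [EE' Le1 le_rest _] := lyndon_fact_cons FE.
have /andP[_ even_rest] := inv.1 _ FE.
have [Ee1 small_ssr even_tj FE_new] := ISF_step_facts isf.
have [_ _ min_sj] := ISF_least_suffix_head isf.
have Ltj : lyndon (r ++ sj) := ISF_lyndon_head Le1 isf.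
case/lyndon_factE: FO => _ Los _.
move: Los sorted_os odd_os bound; rewrite !all_rcons fact_at_rcons sorted_gt_rcons.
case/andP=> Loh Lpre /andP[sorted_pre oh_L] /andP[odd_oh odd_pre] E'_L.
have tj_oh : r ++ sj < oh.
  rewrite lt_neqAle (le_trans _ not_lt) ?Ee1 ?le_prefix // andbT.
  by apply: contraNneq even_tj => ->.
have std_X : std_fact ((r ++ sj) ++ oh) (r ++ sj) oh.
  apply: std_fact_cat Loh (lyndon_neq0 Ltj) _ => c y Etj nc ny.
  exact: le_trans oh_sj (min_sj c y Etj nc ny).
have tj_L : ltw (Some (r ++ sj)) (olast pre).
  by apply: ltw_le_trans E'_L; rewrite EE' Ee1 -catA le_prefix.
have odd_X : odd (size ((r ++ sj) ++ oh)) by rewrite size_cat oddD odd_oh (negbTE even_tj).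
have even_new : all (fun e => ~~ odd (size e)) (ssr ++ rest).
  by rewrite all_cat (sub_all _ small_ssr) // => s /andP[].
have le_oh : all (<= oh) (ssr ++ rest).
  rewrite all_cat; apply/andP; split.
    by apply: sub_all small_ssr => s /andP[_]; rewrite olast_rcons ltw_someE => /ltW.
  by apply: sub_all le_rest => f /le_trans; apply.
rewrite dropl_rcons olast_rcons /= (catA r) in EO; rewrite -EE in FE_new.
have [] := omega_inv_push Lpre odd_pre sorted_pre tj_L oh_L (lyndon_cat Ltj Loh tj_oh)
  odd_X std_X EO FE_new even_new le_oh.
by rewrite -catA in std_X *.
Qed.

Lemma ISF_lt_odd_head u r sj ssr : is_ISF e1 u r (sj :: ssr) -> odd (size sj) ->
  all (< sj) (ssr ++ rest).
Proof.
move=> isf odd_sj; have [_ Le1 le_rest _] := lyndon_fact_cons FE.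
have [_ small_ssr _ _] := ISF_step_facts isf.
have le_sj : all (<= sj) (sj :: ssr).
  by rewrite /= lexx; apply: order_path_min ge_trans (ISF_sorted isf).
rewrite all_cat; apply/andP; split.
  apply/allP=> s s_ssr /=.
  have le_s : s <= sj by apply: (allP le_sj); rewrite inE s_ssr orbT.
  have /andP[even_s _] := allP small_ssr s s_ssr.
  by rewrite lt_neqAle le_s andbT; apply: contraTneq even_s => ->; rewrite odd_sj.
apply: sub_all le_rest => f le_f; apply: le_lt_trans le_f _.
exact: lt_le_trans (ISF_lt_last Le1 isf) (allP le_sj _ (mem_last _ _)).
Qed.

Lemma stepF_omega_inv os' r sj ssr :
  is_lyndon_fact O' os' -> stepF os' (e1 :: rest) r (sj :: ssr) O E ->
  is_lyndon_fact O (os' ++ [:: sj; r]) /\ omega_inv O E.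
Proof.
move=> FO [_ isf sj_o EO EE].
have [odd_os sorted_os _ /andP[_ even_rest] _] := omega_inv_facts inv FO FE.
have [_ Le1 _ _] := lyndon_fact_cons FE.
have [_ small_ssr even_tj FE_new] := ISF_step_facts isf.
have lsf := ISF_least_suffix_head isf; have [_ nsj _] := lsf.
have Lr := ISF_lyndon_prefix Le1 isf.
have /andP[Lsj _] := ISF_lyndon_factors isf.
have [_ _ _ _ odd_sj] := isf; rewrite /= (ltw_lewF sj_o) orbF in odd_sj.
have odd_r : odd (size r) by move: even_tj; rewrite size_cat oddD odd_sj addbT negbK.
have r_sj : r < sj.
  apply: le_lt_trans (le_prefix r sj) _.
  exact: lyndon_lt_suffix (ISF_lyndon_head Le1 isf) erefl (lyndon_neq0 Lr) nsj.
have lt_sj := ISF_lt_odd_head isf odd_sj.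
have Eos : os' ++ [:: sj; r] = rcons (rcons os' sj) r by rewrite -!cats1 -catA.
have sorted_new : sorted >%O (rcons (rcons os' sj) r).
  by rewrite !sorted_gt_rcons olast_rcons sorted_os sj_o ltw_someE r_sj.
have FO_new : is_lyndon_fact O (rcons (rcons os' sj) r).
  case/lyndon_factE: FO => EO' Los _; apply/lyndon_factE; split.
  - by rewrite EO !flatten_rcons EO' catA.
  - by rewrite !all_rcons Lr Lsj Los.
  - exact: gt_sorted_ge.
rewrite Eos -EE in FE_new *; split=> //.
apply: omega_invI FO_new FE_new _ _ sorted_new _ _.
- by rewrite !all_rcons odd_r odd_sj odd_os.
- by rewrite all_cat (sub_all _ small_ssr) // => s /andP[].
- rewrite fact_at_rcons olast_rcons EE -flatten_cat.
  apply: (@ltw_flatten _ _ (Some sj)) Lsj _.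
  by apply: sub_all lt_sj => f; rewrite ltw_someE.
- move=> pre' om r' s /rcons_inj[_ <-] [na Er Ls _].
  have sj_s := least_suffix_fact_le_inner lsf Er na (lyndon_neq0 Ls).
  by apply: sub_all lt_sj => f /ltW /le_trans; apply.
Qed.

End OmegaStep.

Section OmegaComputation.
Local Open Scope order_scope.
Context {d : Order.disp_t} {A : finOrderType d}.
Local Notation word := (seq A).

Lemma omega_step_spec (O' E' O E : word) os' es' :
  omega_inv O' E' -> is_lyndon_fact O' os' -> is_lyndon_fact E' es' ->
  stepS os' es' O E \/ (exists r ss, stepP os' es' r ss O E)
                    \/ (exists r ss, stepF os' es' r ss O E) ->
  [/\ omega_inv O E,
      (stepS os' es' O E ->
         is_lyndon_fact O (rcons (dropl os') (last [::] os' ++ head [::] es')) /\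
         std_fact (last [::] os' ++ head [::] es') (last [::] os') (head [::] es')),
      (forall r ss, stepP os' es' r ss O E ->
         is_lyndon_fact O (rcons (dropl os') (r ++ head [::] ss ++ last [::] os')) /\
         std_fact (r ++ head [::] ss ++ last [::] os') (r ++ head [::] ss) (last [::] os')) &
      (forall r ss, stepF os' es' r ss O E ->
         is_lyndon_fact O (os' ++ [:: head [::] ss; r]))].
Proof.
move=> inv FO; case: es' => [|e1 rest] FE step.
  by case: step => [|[[r [ss []]]|[r [ss []]]]].
have specS : stepS os' (e1 :: rest) O E ->
    [/\ is_lyndon_fact O (rcons (dropl os') (last [::] os' ++ e1)),
        std_fact (last [::] os' ++ e1) (last [::] os') e1 & omega_inv O E].
  case/lastP: os' FO {step} => [|pre oh] FO; first by case.
  by rewrite dropl_rcons last_rcons; apply: (stepS_omega_inv inv FE FO).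
have specP r sj ssr : stepP os' (e1 :: rest) r (sj :: ssr) O E ->
    [/\ is_lyndon_fact O (rcons (dropl os') (r ++ sj ++ last [::] os')),
        std_fact (r ++ sj ++ last [::] os') (r ++ sj) (last [::] os') & omega_inv O E].
  case/lastP: os' FO {step specS} => [|pre oh] FO; first by case.
  by rewrite dropl_rcons last_rcons; apply: (stepP_omega_inv inv FE FO).
split.
- case: step => [/specS[] //|[[r [[|sj ssr] //= /specP[] //]]|[r [[|sj ssr] //= /(stepF_omega_inv inv FE FO)[] //]]]].
- by case/specS.
- by move=> r [|sj ssr] // /specP[].
- by move=> r [|sj ssr] // /(stepF_omega_inv inv FE FO)[].
Qed.

Lemma omega_init_inv n (w O E : word) : in_We n w -> omega_init w O E -> omega_inv O E.
Proof.
case=> _ [fs [Fw _ count_odd]] [fs' [Fw']]; rewrite -(lyndon_fact_unique Fw Fw').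
case/lyndon_factE: (Fw) => Ew Lfs sorted_fs; case: ifP => odd_w.
  case=> f1 [f2 [a [Efs EO EE]]].
  have : count (fun f => odd (size f)) (f1 ++ f2) == 0.
    by move: count_odd; rewrite Efs !count_cat /=; lia.
  rewrite count_odd_eq0 => even_f12.
  apply: (@omega_invI _ _ _ _ [:: [:: a]] (f1 ++ f2)) => //.
  - apply/lyndon_factE; split; first by rewrite EE.
      by move: Lfs; rewrite Efs !all_cat => /and3P[-> _ ->].
    apply: (subseq_sorted ge_trans _ sorted_fs); rewrite Efs.
    exact: cat_subseq (subseq_refl f1) (subseq_cons f2 _).
  - move=> [|? []] // om r s [<-] /std_fact_size.
    by [].
case=> EO EE; apply: (@omega_invI _ _ _ _ [::] fs) => //.
- by rewrite EE.
- rewrite -count_odd_eq0; move: odd_w count_odd.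
  by rewrite -Ew odd_size_flatten; case: count => [|[|]].
- by move=> [].
Qed.

Lemma reach_omega_inv n (w O E : word) : in_We n w -> omega_reach w O E -> omega_inv O E.
Proof.
move=> We; elim=> [O0 E0 /(omega_init_inv We) //|O' E' O0 E0 _ inv _ [os' [es' [FO FE step]]]].
by case: (omega_step_spec inv FO FE step).
Qed.

End OmegaComputation.

Theorem lemma4p23 (d : Order.disp_t) (A : finOrderType d) (n : nat)
    (w' O' E' O E : seq A) (os' es' : seq (seq A)) :
  in_We n w' -> omega_reach w' O' E' -> E' != [::] ->
  is_lyndon_fact O' os' -> is_lyndon_fact E' es' ->
  stepS os' es' O E \/ (exists r ss, stepP os' es' r ss O E)
                    \/ (exists r ss, stepF os' es' r ss O E) ->
  [/\ (* (i) *)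
      (forall es, is_lyndon_fact E es -> all (fun e => ~~ odd (size e)) es),
      (* (ii) first part, (iii), (iv) *)
      (forall os, is_lyndon_fact O os ->
         [/\ all (fun o => odd (size o)) os, uniq os,
             ltw (Some E) (fact_at os (size os).-1) &
             forall pre om r s es e1 rest, os = rcons pre om -> 2 <= size om ->
               std_fact om r s -> is_lyndon_fact E es -> es = e1 :: rest ->
               lexle e1 s]),
      (* (ii) and (v) after a step of type (S') *)
      (stepS os' es' O E ->
         is_lyndon_fact O (rcons (dropl os') (last [::] os' ++ head [::] es')) /\
         std_fact (last [::] os' ++ head [::] es') (last [::] os') (head [::] es')),
      (* (ii) and (vi) after a step of type (P') *)
      (forall r ss, stepP os' es' r ss O E ->
         is_lyndon_fact O (rcons (dropl os') (r ++ head [::] ss ++ last [::] os')) /\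
         std_fact (r ++ head [::] ss ++ last [::] os') (r ++ head [::] ss) (last [::] os')) &
      (* (ii) after a step of type (F') *)
      (forall r ss, stepF os' es' r ss O E ->
         is_lyndon_fact O (os' ++ [:: head [::] ss; r]))].
Proof.
move=> We reach _ FO FE step.
have [[even_E inv_O] specS specP specF] :=
  omega_step_spec (reach_omega_inv We reach) FO FE step.
by split.
Qed.
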